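(* Let $\mathfrak{g}$ be a finite-dimensional simple Lie algebra over $\mathbb{C}$ equipped with a $\mathbb{Z}_n$-grading $\mathfrak{g}=\bigoplus_{i\in\mathbb{Z}_n}\mathfrak{g}_i$ (so $[\mathfrak{g}_i,\mathfrak{g}_j]\subseteq\mathfrak{g}_{i+j}$). Let $j\in\mathbb{Z}_n$ and suppose $h\in\mathfrak{g}_j$ is a semisimple element with $[\mathfrak{g}_0,h]=0$. Then $h$ lies in the center of the subalgebra $\mathfrak{g}^{(j)}:=\bigoplus_{m\in\mathbb{Z}}\mathfrak{g}_{mj}$. In particular, if $j$ is a unit in $\mathbb{Z}_n$, then $h=0$.
   Context: $\mathfrak{g}_0$ denotes the grade-zero component, which is a (reductive) Lie subalgebra of $\mathfrak{g}$. The index $mj$ is computed in $\mathbb{Z}_n$. *)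

(* Lie algebras over C are modelled as finite-dimensional
   vector spaces (vectType) over C := R[i] (complex numbers built on a
   realType R, i.e. the complex field) with a bracket satisfying the axioms. *)
From HB Require Import structures.
From mathcomp Require Import all_boot all_order all_algebra.
From mathcomp Require Import reals.
From mathcomp Require Import complex.
Set Implicit Arguments. Unset Strict Implicit. Unset Printing Implicit Defensive.
Import Order.TTheory GRing.Theory Num.Theory.
Local Open Scope ring_scope.

Section LieDefs.
Variables (F : fieldType) (V : vectType F).

Definition is_lie_bracket (br : V -> V -> V) : Prop :=
  [/\ (forall a x y z, br (a *: x + y) z = a *: br x z + br y z),
      (forall a x y z, br z (a *: x + y) = a *: br z x + br z y),
      (forall x, br x x = 0) &
      (forall x y z, br x (br y z) + br y (br z x) + br z (br x y) = 0)].

Definition is_lie_ideal (br : V -> V -> V) (I : {vspace V}) : Prop :=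
  forall x y, y \in I -> br x y \in I.

Definition is_simple_lie (br : V -> V -> V) : Prop :=
  is_lie_bracket br /\
  (exists x y, br x y != 0) /\
  (forall I : {vspace V}, is_lie_ideal br I -> I = 0%VS \/ I = fullv).

(* A Z_n-grading (n > 0): G i for i < n are the graded pieces (indices are
   taken modulo n); V is their direct sum and [G i, G j] <= G ((i+j) mod n). *)
Definition is_Zn_grading (br : V -> V -> V) (n : nat) (G : nat -> {vspace V}) : Prop :=
  [/\ directv (\sum_(i < n) G i)%VS,
      (\sum_(i < n) G i)%VS = fullv &
      (forall i j x y, (i < n)%N -> (j < n)%N -> x \in G i -> y \in G j ->
         br x y \in G ((i + j) %% n)%N)].

(* h is a semisimple element: ad h = br h is diagonalizable, i.e. V has a
   basis of eigenvectors of ad h. *)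
Definition is_semisimple_elt (br : V -> V -> V) (h : V) : Prop :=
  exists b : seq V, basis_of fullv b /\
    (forall v, v \in b -> exists c : F, br h v = c *: v).

(* g^(j) := \bigoplus_{m in Z} g_{m j}; as m ranges over Z, m j mod n
   ranges over {m j mod n | 0 <= m < n}. *)
Definition graded_subalg (n : nat) (G : nat -> {vspace V}) (j : nat) : {vspace V} :=
  (\sum_(m < n) G ((m * j) %% n)%N)%VS.

Definition in_center (br : V -> V -> V) (S : {vspace V}) (h : V) : Prop :=
  h \in S /\ (forall x, x \in S -> br h x = 0).

End LieDefs.

(** If [h] has degree [j] and commutes with [g_0], then [d = ad h] shifts
    degrees by [j] and kills [g_0], so the degree-[t j] component of [d^t u] is
    [d^t u_0], which vanishes for [t >= 1].  For an eigenvector [u] of [d] with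
    eigenvalue [c <> 0] that component is [c^t u_(t j)]; hence [u_(k j) = 0] for
    every [k], and [d] kills the degree-[m j] components of an eigenbasis, that
    is, all of [g^(j)].  When [j] is a unit, [g^(j) = g], and a central element
    of a simple Lie algebra is [0]. *)
From HB Require Import structures.
From mathcomp Require Import all_boot all_order all_algebra.
From mathcomp Require Import reals.
From mathcomp Require Import complex.
Set Implicit Arguments. Unset Strict Implicit. Unset Printing Implicit Defensive.
Import Order.TTheory GRing.Theory Num.Theory.
Local Open Scope ring_scope.

Section LieBracket.
Variables (F : fieldType) (V : vectType F) (br : V -> V -> V).
Hypothesis br_lie : is_lie_bracket br.

Lemma lie_br_linear h : linear (br h).
Proof. by case: br_lie => _ brDr _ _ a x y; apply: brDr. Qed.

Definition ad h : {linear V -> V} :=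
  HB.pack (br h) (GRing.isLinear.Build F V V *:%R (br h) (lie_br_linear h)).

Lemma lie_brDl x y z : br (x + y) z = br x z + br y z.
Proof. by case: br_lie => brDl _ _ _; have := brDl 1 x y z; rewrite !scale1r. Qed.

Lemma lie_brDr x y z : br z (x + y) = br z x + br z y.
Proof. exact: (linearD (ad z)). Qed.

Lemma lie_brZr a x y : br y (a *: x) = a *: br y x.
Proof. exact: (linearZ_LR (ad y)). Qed.

Lemma lie_br_skew x y : br x y = - br y x.
Proof.
case: (br_lie) => _ _ br_alt _; apply/eqP; rewrite -addr_eq0.
have := br_alt (x + y).
by rewrite lie_brDl !lie_brDr !br_alt add0r addr0 => ->.
Qed.

Lemma lie_brZl a x y : br (a *: x) y = a *: br x y.
Proof. by rewrite lie_br_skew (lie_br_skew x) lie_brZr scalerN. Qed.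

End LieBracket.

Lemma simple_lie_center_eq0 (F : fieldType) (V : vectType F) (br : V -> V -> V) h :
  is_simple_lie br -> (forall x, br h x = 0) -> h = 0.
Proof.
move=> [br_lie [[x [y br_xy_neq0]] simple]] h_central.
have line_ideal : is_lie_ideal br <[h]>%VS.
  move=> z _ /vlineP [a ->].
  by rewrite lie_br_skew // lie_brZl // h_central scaler0 oppr0 mem0v.
case: (simple _ line_ideal) => [h_line0 | h_line_full].
  by apply/eqP; rewrite -memv0 -h_line0 memv_line.
have := memvf x; rewrite -h_line_full => /vlineP [a x_eq].
by move: br_xy_neq0; rewrite x_eq lie_brZl // h_central scaler0 eqxx.
Qed.

Section Grading.
Variables (F : fieldType) (V : vectType F) (n : nat) (G : nat -> {vspace V}).
Hypotheses (n_gt0 : (0 < n)%N) (G_direct : directv (\sum_(i < n) G i)%VS)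
  (G_full : (\sum_(i < n) G i)%VS = fullv).

Definition grade_proj := sumv_pi (\sum_(i < n) G i)%VS.

Definition ord_mod a : 'I_n := Ordinal (ltn_pmod a n_gt0).

Lemma grade_proj_mem (i : 'I_n) v : grade_proj i v \in G i.
Proof. exact: memv_sum_pi. Qed.

Lemma grade_proj_sum v : \sum_(i < n) grade_proj i v = v.
Proof. by apply: sumv_pi_sum; rewrite G_full memvf. Qed.

Lemma grade_proj_sum_eq (vs : 'I_n -> V) k :
  (forall i : 'I_n, vs i \in G i) -> grade_proj k (\sum_(i < n) vs i) = vs k.
Proof.
move=> vsG; have /directv_sum_unique uniq_sum := G_direct.
have := uniq_sum (fun i => grade_proj i (\sum_(i < n) vs i)) vs.
rewrite grade_proj_sum eqxx => /(_ (fun i _ => grade_proj_mem _ _) (fun i _ => vsG i)).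
by move=> /esym/forall_inP/(_ k isT)/eqP.
Qed.

Lemma grade_proj_id (k : 'I_n) z : z \in G k -> grade_proj k z = z.
Proof.
move=> zG; have sum_z : \sum_(i < n) (if i == k then z else 0) = z.
  by rewrite (bigD1 k) //= eqxx big1 ?addr0 // => i /negPf ->.
rewrite -{1}sum_z grade_proj_sum_eq ?eqxx // => i.
by case: eqP => [-> | _] //; rewrite mem0v.
Qed.

Section HomogeneousMap.
Variables (d : {linear V -> V}) (j : nat).
Hypothesis d_homog : forall (i : 'I_n) x, x \in G i -> d x \in G ((i + j) %% n)%N.

Lemma grade_proj_homog a v :
  grade_proj (ord_mod (a + j)%N) (d v) = d (grade_proj (ord_mod a) v).
Proof.
pose shift (i : 'I_n) := ord_mod (i + j)%N.
have shift_inj : injective shift.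
  move=> i k /(congr1 val) /= /eqP; rewrite eqn_modDr !modn_small // => /eqP.
  exact: val_inj.
rewrite -{1}(grade_proj_sum v) linear_sum (partition_big shift xpredT) //=.
rewrite grade_proj_sum_eq; last first.
  by move=> k; apply: memv_suml => i /eqP <-; apply/d_homog/grade_proj_mem.
have -> : ord_mod (a + j)%N = shift (ord_mod a) by apply: val_inj; rewrite /= modnDml.
by rewrite (big_pred1 (ord_mod a)) // => i /=; rewrite (inj_eq shift_inj).
Qed.

Lemma grade_proj_iter t a v :
  grade_proj (ord_mod (a + t * j)%N) (iter t d v) = iter t d (grade_proj (ord_mod a) v).
Proof.
elim: t a v => [|t IHt] a v; first by rewrite mul0n addn0.
by rewrite mulSn addnCA addnC /= grade_proj_homog IHt.
Qed.

Lemma iter_linear_eigen c u t : d u = c *: u -> iter t d u = c ^+ t *: u.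
Proof.
move=> du; elim: t => [|t IHt]; first by rewrite expr0 scale1r.
by rewrite iterS IHt linearZZ du scalerA exprSr.
Qed.

Hypothesis d_G0 : forall x, x \in G 0 -> d x = 0.

Lemma eigen_grade_proj_eq0 c u k :
  c != 0 -> d u = c *: u -> grade_proj (ord_mod (k * j)%N) u = 0.
Proof.
move=> c_neq0 du.
(* [t >= 1] with [t j = k j] modulo [n]. *)
pose t := (k + n.-1).+1.
have t_k : ord_mod (0 + t * j)%N = ord_mod (k * j)%N.
  apply: val_inj; rewrite /= add0n /t -addnS prednK // mulnDl addnC.
  by rewrite [(n * j)%N]mulnC modnMDl.
have iter_G0 : iter t d (grade_proj (ord_mod 0) u) = 0.
  rewrite iterSr d_G0; first by elim: (k + n.-1)%N => //= s ->; rewrite linear0.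
  by have := grade_proj_mem (ord_mod 0) u; rewrite /= mod0n.
have := grade_proj_iter t 0 u; rewrite t_k iter_G0 (iter_linear_eigen t du).
by rewrite linearZZ => /eqP; rewrite scaler_eq0 expf_eq0 (negPf c_neq0) andbF => /eqP.
Qed.

Lemma eigen_grade_proj_ker c u m :
  d u = c *: u -> d (grade_proj (ord_mod (m * j)%N) u) = 0.
Proof.
move=> du; rewrite -grade_proj_homog du linearZZ /= addnC -mulSn.
have [-> | c_neq0] := eqVneq c 0; first by rewrite scale0r.
by rewrite (eigen_grade_proj_eq0 m.+1 c_neq0 du) scaler0.
Qed.

Hypothesis d_diag :
  exists b : seq V, basis_of fullv b /\ forall v, v \in b -> exists c, d v = c *: v.

Lemma diag_homog_ker m z : z \in G ((m * j) %% n)%N -> d z = 0.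
Proof.
move=> zG; rewrite -(grade_proj_id (k := ord_mod (m * j)%N) zG).
have [b [b_basis b_eigen]] := d_diag.
have : z \in span (in_tuple b) by rewrite (span_basis b_basis) memvf.
move=> /coord_span ->; rewrite !linear_sum big1 // => i _.
have [c dc] := b_eigen _ (mem_nth 0 (ltn_ord i)).
by rewrite !linearZZ /= (eigen_grade_proj_ker m dc) scaler0.
Qed.

Lemma diag_homog_graded_subalg_ker z : z \in graded_subalg n G j -> d z = 0.
Proof.
move=> /memv_sumP [vs vsG ->]; rewrite linear_sum big1 // => m _.
exact: diag_homog_ker (vsG m isT).
Qed.

End HomogeneousMap.

Lemma graded_subalg_coprime j : coprime j n -> graded_subalg n G j = fullv.
Proof.
move=> j_n; apply/eqP; rewrite eqEsubv subvf -G_full /graded_subalg.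
apply/subv_sumP => i _.
suff [m <-] : exists m : 'I_n, ((m * j) %% n)%N = i by apply: sumv_sup.
have [j0 | j_gt0] := posnP j.
  move: j_n; rewrite j0 /coprime gcd0n => /eqP n1.
  exists (ord_mod 0); have := ltn_ord i; rewrite {2}n1 ltnS leqn0 => /eqP ->.
  by rewrite muln0 mod0n.
(* Bezout: [u] inverts [j] modulo [n]. *)
have [u v uj_eq _] := egcdnP n j_gt0.
exists (ord_mod (u * i)%N); rewrite /= modnMml mulnAC uj_eq (eqnP j_n) mulnDl mul1n.
by rewrite mulnAC modnMDl modn_small.
Qed.

End Grading.

Theorem proposition1p4 (R : realType) (V : vectType R[i]) (br : V -> V -> V)
  (n : nat) (G : nat -> {vspace V}) (j : nat) (h : V) :
  is_simple_lie br -> (0 < n)%N -> is_Zn_grading br n G ->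
  (j < n)%N -> h \in G j -> is_semisimple_elt br h ->
  (forall x, x \in G 0%N -> br x h = 0) ->
  in_center br (graded_subalg n G j) h /\ (coprime j n -> h = 0).
Proof.
move=> simple n_gt0 [G_direct G_full G_br] j_lt_n hG h_diag h_G0.
have br_lie := simple.1.
have ad_homog (i : 'I_n) x : x \in G i -> ad br_lie h x \in G ((i + j) %% n)%N.
  by move=> xG; rewrite addnC; apply: G_br.
have ad_G0 x : x \in G 0 -> ad br_lie h x = 0.
  by move=> xG; rewrite /= lie_br_skew // h_G0 ?oppr0.
have ad_ker z : z \in graded_subalg n G j -> br h z = 0.
  exact: diag_homog_graded_subalg_ker ad_homog ad_G0 h_diag z.
have h_center : in_center br (graded_subalg n G j) h.
  split; last exact: ad_ker.
  apply: (sumv_sup (ord_mod n_gt0 1)) => //.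
  by rewrite -memvE modnMml mul1n modn_small.
split=> // j_n; apply: simple_lie_center_eq0 simple _ => x.
by apply: ad_ker; rewrite graded_subalg_coprime ?memvf.
Qed.
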